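(* Let $(X,\mathcal{A},p)$ be a standard Borel probability space and let $e:(X,\mathcal{A},p)\to(X,\mathcal{A},p)$ be a measure-preserving Markov kernel that is $p$-a.s. idempotent (for all $B\in\mathcal{A}$, $\int_X e(B\mid x')\,e(dx'\mid x)=e(B\mid x)$ for $p$-a.a. $x$). Let $\mathcal{I}_e=\{B\in\mathcal{A}: e(B\mid x)=1_B(x)\text{ for }p\text{-a.a. }x\}$. Let $\pi:(X,\mathcal{A},p)\to(X,\mathcal{I}_e,p)$ be the kernel $\pi(B\mid x)=1_B(x)$ and $\pi^+:(X,\mathcal{I}_e,p)\to(X,\mathcal{A},p)$ the kernel $\pi^+(A\mid x)=\mathbb{P}[A\mid\mathcal{I}_e](x)$ (a regular version of the conditional probability). Then $\pi\circ\pi^+=\mathrm{id}_{(X,\mathcal{I}_e,p)}$ and $\pi^+\circ\pi=e$, up to almost sure equality of kernels; i.e. $((X,\mathcal{I}_e,p),\pi^+,\pi)$ splits $e$ in $\mathsf{GKrn}$.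
   Context: A Markov kernel $k$ assigns probability measures $k(\cdot\mid x)$ measurably in $x$; measure-preserving means $\int k(B\mid x)p(dx)=q(B)$; composition $(\ell\circ k)(C\mid x)=\int\ell(C\mid y)k(dy\mid x)$; two kernels are identified if for every measurable $B$ they agree $p$-a.e. $\mathsf{GKrn}$ is the category of probability spaces with these equivalence classes as morphisms. $\mathcal{I}_e$ is a $\sigma$-algebra (the invariant $\sigma$-algebra of $e$). *)

From HB Require Import structures.
From mathcomp Require Import all_boot all_order all_algebra.
From mathcomp Require Import all_classical all_reals all_analysis.
Set Implicit Arguments. Unset Strict Implicit. Unset Printing Implicit Defensive.
Import Order.TTheory GRing.Theory Num.Theory.
Import numFieldNormedType.Exports.
Local Open Scope classical_set_scope.
Local Open Scope ring_scope.

(* Standard Borel space: measurably isomorphic to a Borel subset of a Polish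
   space (complete, separable, Hausdorff metric space). *)
Definition standard_Borel (R : realType) d (T : measurableType d) : Prop :=
  exists (Y : completePseudoMetricType R),
    hausdorff_space Y /\
    (exists D : set Y, countable D /\ dense D) /\
    exists (f : T -> Y) (S : set Y),
      <<s [set U | open U] >> S /\
      injective f /\ f @` setT = S /\
      (forall A : set T, measurable A -> <<s [set U | open U] >> (f @` A)) /\
      (forall B : set Y, <<s [set U | open U] >> B -> measurable (f @^-1` B)).

Definition kcomp_GKrn (R : realType) d1 d2 d3 (X : measurableType d1)
  (Y : measurableType d2) (Z : measurableType d3)
  (l : Y -> {measure set Z -> \bar R}) (k : X -> {measure set Y -> \bar R})
  : X -> set Z -> \bar R :=
  fun x C => (\int[k x]_y l y C)%E.

Definition kernel_ae_eq (R : realType) d1 d2 (X : measurableType d1)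
  (Z : measurableType d2) (mu : set X -> \bar R) (k l : X -> set Z -> \bar R)
  : Prop :=
  forall B : set Z, measurable B -> {ae mu, forall x, k x B = l x B}.

Definition kernel_preserving (R : realType) d1 d2 (X : measurableType d1)
  (Y : measurableType d2) (mu : {measure set X -> \bar R})
  (nu : set Y -> \bar R) (k : X -> {measure set Y -> \bar R}) : Prop :=
  forall B : set Y, measurable B -> (\int[mu]_x k x B)%E = nu B.

Definition kernel_ae_idempotent (R : realType) d (X : measurableType d)
  (p : {measure set X -> \bar R}) (e : X -> {measure set X -> \bar R}) : Prop :=
  kernel_ae_eq p (kcomp_GKrn e e) (fun x => e x).

Definition invariant_sets (R : realType) d (X : measurableType d)
  (p : {measure set X -> \bar R}) (e : X -> {measure set X -> \bar R})
  : set (set X) :=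
  [set B | measurable B /\ {ae p, forall x, e x B = (\1_B x)%:E}].

Definition Ie_type (R : realType) d (X : measurableType d)
  (p : {measure set X -> \bar R}) (e : X -> {measure set X -> \bar R}) :=
  g_sigma_algebraType (invariant_sets p e).

Definition p_Ie (R : realType) d (X : measurableType d)
  (p : {measure set X -> \bar R}) (e : X -> {measure set X -> \bar R})
  : set (Ie_type p e) -> \bar R := fun A => p A.

Definition pi_ker (R : realType) d (X : measurableType d)
  (p : {measure set X -> \bar R}) (e : X -> {measure set X -> \bar R})
  : X -> {measure set (Ie_type p e) -> \bar R} :=
  fun x => @dirac _ (Ie_type p e) (x : Ie_type p e) R.

Definition id_Ie (R : realType) d (X : measurableType d)
  (p : {measure set X -> \bar R}) (e : X -> {measure set X -> \bar R})
  : Ie_type p e -> {measure set (Ie_type p e) -> \bar R} :=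
  fun x => @dirac _ (Ie_type p e) x R.

(* q is a regular version of the conditional probability P[ . | I_e]:
   for each measurable A, x |-> q(A|x) is I_e-measurable (part of being a
   kernel from (X,I_e)) and \int_I q(A|x) p(dx) = p(A /\ I) for I in I_e. *)
Definition is_reg_cond_prob (R : realType) d (X : measurableType d)
  (p : {measure set X -> \bar R}) (e : X -> {measure set X -> \bar R})
  (q : R.-pker (Ie_type p e) ~> X) : Prop :=
  forall A : set X, measurable A ->
    forall I : set (Ie_type p e), measurable I ->
      (\int[p]_(x in (I : set X)) q (x : Ie_type p e) A)%E = p (A `&` I).

Arguments p_Ie {R d X} p e.
Arguments pi_ker {R d X} p e.
Arguments id_Ie {R d X} p e.
Arguments Ie_type {R d X} p e.
Arguments is_reg_cond_prob {R d X} p e q.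

From HB Require Import structures.
From mathcomp Require Import all_boot all_order all_algebra.
From mathcomp Require Import all_classical all_reals all_analysis.
From mathcomp Require Import measurable_realfun ring.
Import Order.TTheory GRing.Theory Num.Theory.
Local Open Scope classical_set_scope.
Local Open Scope ring_scope.

(* Fix a measurable C and write r x := e(C | x).  By idempotence, r x is the
   mean of r under e(. | x), so V x := \int (r y - r x)^2 e(dy | x) satisfies
   V x + r(x)^2 = \int r^2 de(. | x).  Integrating against p, which e
   preserves, gives \int V dp = 0: for p-a.e. x, r is e(. | x)-a.s. equal to
   r x.  Hence every superlevel set of r is invariant, i.e. r is
   I_e-measurable; as \int_I r dp = p (C `&` I) for I in I_e, r is a version of
   P[C | I_e], and two I_e-measurable versions agree outside an I_e-null set.
   Comparing with pi^+ (C | .) = (pi^+ o pi)(C | .) gives pi^+ o pi = e; the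
   same uniqueness applied to 1_B, B in I_e, gives pi o pi^+ = id. *)

Lemma ae_notin_measure0 d (T : measurableType d) (R : realType)
    (mu : {measure set T -> \bar R}) (A : set T) :
  measurable A -> {ae mu, forall y, ~ A y} -> mu A = 0%E.
Proof.
move=> mA aeA; apply: measure_negligible mA _.
by apply: negligibleS aeA => y Ay /=; apply.
Qed.

Lemma integrable_unit_interval d (T : measurableType d) (R : realType)
    (P : probability T R) (f : T -> \bar R) :
  measurable_fun setT f -> (forall x, 0 <= f x <= 1)%E ->
  P.-integrable setT f.
Proof.
move=> mf f01.
apply: le_integrable (finite_measure_integrable_cst _ 1 measurableT) => //.
by move=> x _; case/andP: (f01 x) => f0 f1; rewrite gee0_abs//= normr1.
Qed.

Lemma integral_sqr_centered d (Y : measurableType d) (R : realType)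
    (P : {measure set Y -> \bar R}) (g : Y -> R) (c : R) :
  P setT = 1%E -> measurable_fun setT g -> (forall y, 0 <= g y) ->
  (\int[P]_y (g y)%:E = c%:E)%E ->
  (\int[P]_y ((g y - c) ^+ 2)%:E + (c ^+ 2)%:E = \int[P]_y (g y ^+ 2)%:E)%E.
Proof.
move=> P1 mg g0 gc.
have c0 : 0 <= c by rewrite -lee_fin -gc integral_ge0// => y _; rewrite lee_fin.
have mgc : measurable_fun setT (fun y => (g y - c) ^+ 2).
  by apply: measurable_funX; apply: measurable_funB => //; exact: measurable_cst.
have mg2 : measurable_fun setT (fun y => g y ^+ 2) by exact: measurable_funX.
have lhsE : (\int[P]_y ((g y - c) ^+ 2 + c *+ 2 * g y)%:E =
    \int[P]_y ((g y - c) ^+ 2)%:E + (c *+ 2 * c)%:E)%E.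
  under eq_integral do rewrite EFinD.
  rewrite ge0_integralD//; last 4 first.
  - by move=> y _; rewrite lee_fin sqr_ge0.
  - exact/measurable_EFinP.
  - by move=> y _; rewrite lee_fin mulr_ge0// mulrn_wge0.
  - by apply/measurable_EFinP; apply: measurable_funM => //; exact: measurable_cst.
  congr (_ + _); under eq_integral do rewrite EFinM.
  rewrite ge0_integralZl//; last 3 first.
  - exact/measurable_EFinP.
  - by move=> y _; rewrite lee_fin.
  - by rewrite lee_fin mulrn_wge0.
  by rewrite gc.
have rhsE : (\int[P]_y (g y ^+ 2 + c ^+ 2)%:E =
    \int[P]_y (g y ^+ 2)%:E + (c ^+ 2)%:E)%E.
  under eq_integral do rewrite EFinD.
  rewrite ge0_integralD//; last 3 first.
  - by move=> y _; rewrite lee_fin sqr_ge0.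
  - exact/measurable_EFinP.
  - by move=> y _; rewrite lee_fin sqr_ge0.
  by congr (_ + _); rewrite integral_cst// P1 mule1.
have : (\int[P]_y ((g y - c) ^+ 2 + c *+ 2 * g y)%:E =
        \int[P]_y (g y ^+ 2 + c ^+ 2)%:E)%E.
  by apply: eq_integral => y _; congr EFin; ring.
rewrite lhsE rhsE => /(congr1 (fun z : \bar R => z - (c ^+ 2)%:E)%E).
rewrite addeK// => <-.
by rewrite (_ : c *+ 2 * c = c ^+ 2 + c ^+ 2) ?EFinD ?addeA ?addeK//; ring.
Qed.

Section probability_kernel.
Context d1 d2 (X : measurableType d1) (Y : measurableType d2) (R : realType)
  (k : R.-pker X ~> Y).
Local Open Scope ereal_scope.

Let kT x : k x [set: Y] = 1. Proof. exact: prob_kernel. Qed.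

Lemma prob_kernel_le1 x [A] : measurable A -> k x A <= 1.
Proof. by move=> mA; rewrite -(kT x); apply: le_measure; rewrite ?inE. Qed.

Lemma prob_kernel_fin_num x [A] : measurable A -> k x A \is a fin_num.
Proof.
move=> mA; rewrite ge0_fin_numE ?measure_ge0//.
by rewrite (le_lt_trans (prob_kernel_le1 x mA)) ?ltry.
Qed.

Lemma prob_kernel_setC x [A] : measurable A -> k x (~` A) = 1 - k x A.
Proof.
move=> mA; rewrite -(kT x) -(setvU A) measureU ?addeK ?setICl//.
- exact: prob_kernel_fin_num.
- exact: measurableC.
Qed.

Lemma prob_kernel_ae_eq1 x [A] : measurable A -> {ae k x, forall y, A y} ->
  k x A = 1.
Proof.
move=> mA aeA; have mCA := measurableC mA.
by rewrite -[A]setCK prob_kernel_setC// (measure_negligible mCA aeA) sube0.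
Qed.

End probability_kernel.

Lemma integral_kernel_preserving {d1 d2} {X : measurableType d1}
    {Y : measurableType d2} {R : realType} {mu : probability X R}
    {nu : {measure set Y -> \bar R}} {k : R.-pker X ~> Y} {f : Y -> \bar R} :
  kernel_preserving mu nu k -> (forall y, 0 <= f y)%E ->
  measurable_fun setT f ->
  (\int[mu]_x \int[k x]_y f y = \int[nu]_y f y)%E.
Proof.
move=> k_pres f0 mf.
have mmu : measurable_fun [set: unit] (fun=> mu : pprobability X R).
  exact: measurable_cst.
(* The composite of the constant kernel [mu] with [k] is [nu]. *)
rewrite -[LHS](integral_kcomp (kprobability mmu) (kernel.kernel_snd k) tt f0 mf).
by apply: eq_measure_integral => A mA _; exact: k_pres.
Qed.

Section g_sigma_measure.
Context {d} {X : measurableType d} {R : realType}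
  (mu : {measure set X -> \bar R}) {G : set (set X)}.
Hypothesis G_measurable : G `<=` measurable.
Local Notation XG := (g_sigma_algebraType G).

Lemma g_sigma_measurable [A : set X] : <<s G >> A -> measurable A.
Proof.
by apply: smallest_sub; [exact: sigma_algebra_measurable|exact: G_measurable].
Qed.

Lemma measurable_id_g_sigma : measurable_fun [set: X] (id : X -> XG).
Proof. by move=> _ A /g_sigma_measurable mA; rewrite setTI. Qed.

Lemma g_sigma_measurable_fun [f : X -> \bar R] :
  measurable_fun (T := XG) setT f -> measurable_fun setT f.
Proof. by move=> mf; exact: measurableT_comp mf measurable_id_g_sigma. Qed.

(* The measure structure of [pushforward] takes the measurability proof as an
   argument that inference cannot supply. *)
Definition g_sigma_measure : {measure set XG -> \bar R}.
Proof. refine (pushforward mu (id : X -> XG)); exact: measurable_id_g_sigma. Defined.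

Lemma ae_g_sigma_measure (P : X -> Prop) :
  {ae g_sigma_measure, forall x, P x} -> {ae mu, forall x, P x}.
Proof.
by case=> N [mN N0 PN]; exists N; split => //; exact: g_sigma_measurable.
Qed.

Lemma integral_g_sigma_ae_eq (f g : X -> \bar R) :
  mu.-integrable setT f -> mu.-integrable setT g ->
  measurable_fun (T := XG) setT f -> measurable_fun (T := XG) setT g ->
  (forall I, <<s G >> I ->
    (\int[mu]_(x in I) f x = \int[mu]_(x in I) g x)%E) ->
  {ae g_sigma_measure, forall x, f x = g x}.
Proof.
move=> fi gi mf mg fg.
have restrE h I : mu.-integrable setT h -> measurable_fun (T := XG) setT h ->
    <<s G >> I ->
    (\int[g_sigma_measure]_(x in I) h x = \int[mu]_(x in I) h x)%E.
  move=> hi mh mI; rewrite (integral_pushforward measurable_id_g_sigma)//.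
  by apply: integrableS hi => //; exact: g_sigma_measurable.
have : ae_eq g_sigma_measure setT f g.
  apply: integral_ae_eq => //.
    exact: (integrable_pushforward measurable_id_g_sigma).
  by move=> E _ mE; rewrite !restrE// fg.
by apply: filterS => x /(_ I).
Qed.

End g_sigma_measure.

Section invariant_sets.
Context {R : realType} {d : measure_display} {X : measurableType d}
  {p : probability X R} {e : R.-pker X ~> X}.
Local Notation Inv := (invariant_sets p e).
Local Open Scope ereal_scope.

Lemma invariant_sets_sigma_algebra : sigma_algebra setT Inv.
Proof.
split.
- by split => //; apply: aeW => x; rewrite measure0 indic0.
- move=> A [mA aeA]; split; first exact: measurableD.
  apply: filterS aeA => x eA.
  rewrite setTD prob_kernel_setC// eA indicC indicE.
  by case: (x \in A); rewrite /= -EFinD ?subrr ?subr0.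
- move=> A invA; have mA n := (invA n).1; have mUA := bigcupT_measurable _ mA.
  split => //; apply: filterS (ae_foralln (fun n => (invA n).2)) => x eA.
  have [[n _ Anx]|UAx] := pselect ((\bigcup_n A n) x).
    rewrite indicE mem_set; last by exists n.
    apply/eqP; rewrite eq_le prob_kernel_le1//=.
    have := eA n; rewrite indicE mem_set// => <-.
    by apply: le_measure; rewrite ?inE//; exact: bigcup_sup.
  rewrite indicE memNset//; apply/eqP; rewrite -measure_le0.
  apply: le_trans (measure_sigma_subadditive _ mA mUA (@subset_refl _ _)) _.
  rewrite eseries0// => n _ _; rewrite eA indicE memNset// => Anx.
  by apply: UAx; exists n.
Qed.

Lemma g_sigma_invariant_sets : <<s Inv >> = Inv.
Proof. exact: smallest_id invariant_sets_sigma_algebra. Qed.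

Lemma invariant_sets_measurable : Inv `<=` measurable.
Proof. by move=> B []. Qed.

Lemma p_IeE : p_Ie p e = g_sigma_measure p invariant_sets_measurable.
Proof. by []. Qed.

Lemma reg_cond_prob_ae_eq [qp : R.-pker Ie_type p e ~> X] [A] [g : X -> \bar R] :
  is_reg_cond_prob p e qp -> measurable A ->
  measurable_fun (T := Ie_type p e) setT g -> (forall x, 0 <= g x <= 1) ->
  (forall I, Inv I -> \int[p]_(x in I) g x = p (A `&` I)) ->
  {ae p_Ie p e, forall x, qp x A = g x}.
Proof.
move=> qp_cond mA mg g01 gI; have mq := measurable_kernel qp A mA.
have mInv := invariant_sets_measurable.
rewrite p_IeE; apply: integral_g_sigma_ae_eq => //.
- apply: integrable_unit_interval; first exact: (g_sigma_measurable_fun mInv).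
  by move=> x; rewrite measure_ge0 prob_kernel_le1.
- exact/integrable_unit_interval/g01/(g_sigma_measurable_fun mInv).
- by move=> I mI; rewrite qp_cond// gI// -g_sigma_invariant_sets.
Qed.

Lemma kcomp_pi_cond_prob (qp : R.-pker Ie_type p e ~> X) :
  is_reg_cond_prob p e qp ->
  kernel_ae_eq (p_Ie p e) (kcomp_GKrn (pi_ker p e) qp) (fun x => id_Ie p e x).
Proof.
move=> qp_cond B mB; have mBX := g_sigma_measurable invariant_sets_measurable mB.
have mB1 : measurable_fun (T := Ie_type p e) setT (fun x => (\1_B x : R)%:E).
  exact/measurable_EFinP/measurable_indic.
have qpB : {ae p_Ie p e, forall x, qp x B = (\1_B x)%:E}.
  apply: reg_cond_prob_ae_eq => //.
  - by move=> x; rewrite indicE; case: (x \in B); rewrite /= ?lexx ?lee01.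
  - by move=> I [mI _]; rewrite integral_indic.
rewrite p_IeE in qpB *; apply: filterS qpB => x qpB.
rewrite /kcomp_GKrn /id_Ie /pi_ker.
transitivity (\int[qp x]_y (\1_B y : R)%:E).
  by apply: eq_integral => y _; exact: diracE.
by rewrite integral_indic// setIT qpB; exact/esym/diracE.
Qed.

Section preserving.
Hypothesis e_pres : kernel_preserving p p e.

Lemma integral_invariant_set [C I] : measurable C -> Inv I ->
  \int[p]_(x in I) e x C = p (C `&` I).
Proof.
move=> mC [mI eI]; have mCI := measurableI _ _ mC mI.
rewrite -e_pres// [LHS]integral_mkcond.
apply: (ae_eq_integral (fun x => e x (C `&` I))).
- exact: measurableT.
- apply/(measurable_restrictT _ mI).1.
  exact: measurable_funS (measurable_kernel e C mC).
- exact: measurable_kernel.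
apply: filterS eI => x eIx _; rewrite patchE.
case: ifPn => [/set_mem Ix|Ix].
- have eCI : e x (~` I) = 0.
    by rewrite prob_kernel_setC// eIx indicE mem_set// subee.
  rewrite (measureDI (e x) mC mI) [X in X + _](_ : _ = 0) ?add0e//.
  apply/eqP; rewrite -measure_le0 -eCI le_measure ?inE//.
  + exact: measurableD.
  + exact: measurableC.
- have eI0 : e x I = 0 by rewrite eIx indicE (negbTE Ix).
  change (0 = e x (C `&` I)); apply/esym/eqP.
  by rewrite -measure_le0 -eI0 le_measure ?inE//; exact: subIsetr.
Qed.

Hypothesis e_idem : kernel_ae_idempotent p e.

Section kernel_variance.
Context {C : set X} (mC : measurable C).

Let r x := fine (e x C).

Let eCE x : e x C = (r x)%:E.
Proof. by rewrite fineK// prob_kernel_fin_num. Qed.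

Let r_ge0 x : (0 <= r x)%R.
Proof. by rewrite -lee_fin -eCE measure_ge0. Qed.

Let measurable_r : measurable_fun setT r.
Proof. by apply: measurableT_comp => //; exact: measurable_kernel. Qed.

Let V x := \int[e x]_y ((r y - r x) ^+ 2)%:E.

Let ae_V_eq0 : {ae p, forall x, V x = 0}.
Proof.
have mr2 : measurable_fun setT (fun x => (r x ^+ 2)%:E).
  by apply/measurable_EFinP; exact: measurable_funX.
have V0 x : 0 <= V x by apply: integral_ge0 => y _; rewrite lee_fin sqr_ge0.
have mV : measurable_fun setT V.
  apply: (measurable_fun_integral_sfinite_kernel
    (fun xy : X * X => ((r xy.2 - r xy.1) ^+ 2)%:E) e).
    by move=> xy; rewrite lee_fin sqr_ge0.
  apply/measurable_EFinP; apply: measurable_funX; apply: measurable_funB.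
    exact: measurableT_comp measurable_r measurable_snd.
  exact: measurableT_comp measurable_r measurable_fst.
have V_r2 : {ae p, forall x, V x + (r x ^+ 2)%:E = \int[e x]_y (r y ^+ 2)%:E}.
  apply: filterS (e_idem _ mC) => x ex; apply: integral_sqr_centered => //.
    exact: prob_kernel.
  by rewrite -eCE -ex; apply: eq_integral => y _; rewrite eCE.
have r2_fin : \int[p]_x (r x ^+ 2)%:E \is a fin_num.
  rewrite ge0_fin_numE ?integral_ge0// => [|x _]; last by rewrite lee_fin sqr_ge0.
  apply: (@le_lt_trans _ _ (\int[p]_x (cst 1%E) x)); last first.
    by rewrite integral_cst//= mul1e probability_setT ltry.
  apply: ge0_le_integral => //= x _; rewrite ?lee_fin ?sqr_ge0// expr_le1//.
  by rewrite -lee_fin -eCE prob_kernel_le1.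
have : \int[p]_x (V x + (r x ^+ 2)%:E) = \int[p]_x (r x ^+ 2)%:E.
  rewrite -[RHS](integral_kernel_preserving e_pres) => [||//]; last first.
    by move=> x; rewrite lee_fin sqr_ge0.
  apply: ge0_ae_eq_integral => //.
  - exact: emeasurable_funD.
  - apply: measurable_fun_integral_kernel => //; first exact: measurable_kernel.
    by move=> x; rewrite lee_fin sqr_ge0.
  - by move=> x _; rewrite adde_ge0// lee_fin sqr_ge0.
  - by move=> x _; apply: integral_ge0 => y _; rewrite lee_fin sqr_ge0.
  - by apply: filterS V_r2 => x + _.
rewrite ge0_integralD// => [|x _]; last by rewrite lee_fin sqr_ge0.
move=> /(congr1 (fun z => z - \int[p]_x (r x ^+ 2)%:E)); rewrite addeK// subee//.
move=> intV; have := (ae_eq_integral_abs p measurableT mV).1.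
rewrite -intV; under [X in X = _ -> _]eq_integral do rewrite gee0_abs//.
by move=> /(_ erefl); apply: filterS => x /(_ I).
Qed.

Lemma ae_kernel_const : {ae p, forall x, {ae e x, forall y, e y C = e x C}}.
Proof.
apply: filterS ae_V_eq0 => x Vx.
have mdev : measurable_fun setT (fun y => ((r y - r x) ^+ 2)%:E).
  by apply/measurable_EFinP/measurable_funX/measurable_funB.
have := (ae_eq_integral_abs (e x) measurableT mdev).1.
under [X in X = _ -> _]eq_integral do rewrite gee0_abs ?lee_fin ?sqr_ge0//.
move=> /(_ Vx); apply: filterS => y /(_ I) /= /eqP.
by rewrite eqe sqrf_eq0 subr_eq0 !eCE => /eqP ->.
Qed.

End kernel_variance.

Lemma invariant_superlevel C t : measurable C -> Inv [set x | t%:E < e x C].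
Proof.
move=> mC; set L := [set x | t%:E < e x C].
have mL : measurable L.
  rewrite -[X in measurable X]setTI.
  by apply: measurable_lte => //; exact: measurable_kernel.
split => //; apply: filterS (ae_kernel_const mC) => x eC.
rewrite indicE; have [Lx|Lx] := pselect (L x).
  rewrite mem_set//; apply: prob_kernel_ae_eq1 => //.
  by apply: filterS eC => y eyx; rewrite /L /= eyx.
rewrite memNset//; apply: ae_notin_measure0 => //.
by apply: filterS eC => y eyx; rewrite /L /= eyx.
Qed.

Lemma measurable_kernel_invariant [C] : measurable C ->
  measurable_fun (T := Ie_type p e) setT (e ^~ C).
Proof.
move=> mC; apply: measurability; first exact: (ErealGenOInfty.measurableE R).
move=> _ [_ [t ->] <-]; rewrite setTI.
have -> : e ^~ C @^-1` `]t%:E, +oo[%classic = [set x | t%:E < e x C].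
  by apply/seteqP; split => x /=; rewrite in_itv /= andbT.
by apply: sub_sigma_algebra; exact: invariant_superlevel.
Qed.

Lemma kcomp_cond_prob_pi (qp : R.-pker Ie_type p e ~> X) :
  is_reg_cond_prob p e qp ->
  kernel_ae_eq p (kcomp_GKrn qp (pi_ker p e)) (fun x => e x).
Proof.
move=> qp_cond C mC.
have qpC : {ae p_Ie p e, forall x, qp x C = e x C}.
  apply: reg_cond_prob_ae_eq => //.
  - exact: measurable_kernel_invariant.
  - by move=> x; rewrite measure_ge0 prob_kernel_le1.
  - by move=> I; exact: integral_invariant_set.
rewrite p_IeE in qpC; move: qpC => /ae_g_sigma_measure.
(* The goal sees [p] through [Probability.sort], which hides its filter. *)
apply: (@filterS _ _ (ae_filter_ringOfSetsType p)) => x qpCx.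
rewrite /kcomp_GKrn /pi_ker integral_dirac ?diracE ?mem_set ?mul1e//.
exact: measurable_kernel.
Qed.

End preserving.
End invariant_sets.

Theorem theorem4p6 (R : realType) (d : measure_display) (X : measurableType d)
  (p : probability X R) (e : R.-pker X ~> X)
  (qp : R.-pker (Ie_type p e) ~> X) :
  standard_Borel R X ->
  kernel_preserving p p e ->
  kernel_ae_idempotent p e ->
  is_reg_cond_prob p e qp ->
  kernel_ae_eq (p_Ie p e) (kcomp_GKrn (pi_ker p e) qp) (fun x => id_Ie p e x)
  /\ kernel_ae_eq p (kcomp_GKrn qp (pi_ker p e)) (fun x => e x).
Proof.
(* Standard Borelness only serves to provide [qp], which is given here. *)
move=> _ e_pres e_idem qp_cond; split.
- exact: kcomp_pi_cond_prob.
- exact: kcomp_cond_prob_pi.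
Qed.
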